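(* Let $X$ be a locally connected compact metric space and let $f\colon X\to X$ be a minimal homeomorphism. If there exists a Borel probability measure on $X$ which is inner-distal with respect to $f$, then $f$ is inner-distal.
   Context: A homeomorphism $f\colon X\to X$ is minimal if every orbit $\{f^n(x)\colon n\in\mathbb{Z}\}$ is dense in $X$. The proximal cell of $x$ is $\mathcal{P}(x)=\{y\in X\colon \inf_{n\in\mathbb{Z}} d(f^n(x),f^n(y))=0\}$; $f$ is inner-distal if $\operatorname{Int}\mathcal{P}(x)=\emptyset$ for all $x\in X$. A Borel probability measure $\mu$ is inner-distal with respect to $f$ if $\mu(\operatorname{Int}\mathcal{P}(x))=0$ for all $x\in X$. *)

From HB Require Import structures.
From mathcomp Require Import all_boot all_order all_algebra.
From mathcomp Require Import all_classical all_reals all_analysis.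
Set Implicit Arguments. Unset Strict Implicit. Unset Printing Implicit Defensive.
Import Order.TTheory GRing.Theory Num.Theory.
Local Open Scope classical_set_scope.
Local Open Scope ring_scope.

(* Integer iterate f^n of a homeomorphism f with inverse g:
   f^n = f o ... o f (n times) for n >= 0, and g^(-n) for n < 0. *)
Definition zit {T : Type} (f g : T -> T) (n : int) : T -> T :=
  match n with
  | Posz k => iter k f
  | Negz k => iter k.+1 g
  end.

Definition homeomorphism {X : topologicalType} (f g : X -> X) : Prop :=
  cancel f g /\ cancel g f /\ continuous f /\ continuous g.

Definition orbit {T : Type} (f g : T -> T) (x : T) : set T :=
  [set zit f g n x | n in [set: int]].

Definition minimal {X : topologicalType} (f g : X -> X) : Prop :=
  forall x : X, closure (orbit f g x) = [set: X].

Definition locally_connected (X : topologicalType) : Prop :=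
  forall (x : X) (U : set X), nbhs x U ->
    exists V : set X, [/\ open V, connected V, V x & V `<=` U].

Definition proximal_cell {R : realType} {X : metricType R} (f g : X -> X)
    (x : X) : set X :=
  [set y | inf [set mdist (zit f g n x) (zit f g n y) | n in [set: int]] = 0].

Definition inner_distal {R : realType} {X : metricType R} (f g : X -> X) : Prop :=
  forall x : X, interior (proximal_cell f g x) = set0.

Definition inner_distal_measure {R : realType} {X : metricType R}
    (f g : X -> X) (mu : set (g_sigma_algebraType (@open X)) -> \bar R) : Prop :=
  forall x : X, mu (interior (proximal_cell f g x)) = 0%E.

(* A (nonempty) metric space: the Borel sigma-algebra construction
   g_sigma_algebraType of MathComp-Analysis needs a pointed carrier.
   Nonemptiness is implied by the existence of a probability measure. *)
#[short(type="pointedMetricType")]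
HB.structure Definition PointedMetric (K : numDomainType) :=
  { M of Metric K M & isPointed M }.

From Pilot Require Import Defs.
From HB Require Import structures.
From mathcomp Require Import all_boot all_order all_algebra.
From mathcomp Require Import all_classical all_reals all_analysis.
From mathcomp Require Import zify.
Import Order.TTheory GRing.Theory Num.Theory.
Local Open Scope classical_set_scope.
Local Open Scope ring_scope.

(* The proximal relation is invariant under f, so f^n maps Int P(f^-n x)
   onto Int P(x).  If Int P(x) contains a point, minimality makes every
   orbit enter it; hence the countably many open sets Int P(f^m x), m in Z,
   cover X.  Each is null for an inner-distal measure, which contradicts
   mu(X) = 1. *)

Section Iterates.
Context {T : Type} {f g : T -> T}.
Hypotheses (fK : cancel f g) (gK : cancel g f).

Lemma zitS (n : int) x : zit f g (n + 1) x = f (zit f g n x).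
Proof.
case: n => [k|[|k]].
- by have -> : Posz k + 1 = Posz k.+1 by rewrite -addn1.
- by rewrite /= gK.
- have -> : Negz k.+1 + 1 = Negz k by rewrite !NegzE; lia.
  by rewrite /= gK.
Qed.

Lemma zitP (n : int) x : zit f g (n - 1) x = g (zit f g n x).
Proof. by rewrite -[in RHS](subrK 1 n) zitS fK. Qed.

Lemma zitD (m n : int) x : zit f g (m + n) x = zit f g m (zit f g n x).
Proof.
case: m => [k|k].
- elim: k => [|k IH]; first by rewrite add0r.
  have -> : Posz k.+1 = Posz k + 1 by rewrite -addn1.
  by rewrite addrAC !zitS IH.
- elim: k => [|k IH].
  + have -> : Negz 0 = 0 - 1 by [].
    by rewrite addrAC zitP add0r.
  + have -> : Negz k.+1 = Negz k - 1 by rewrite !NegzE; lia.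
    by rewrite addrAC !zitP IH.
Qed.

Lemma zitNK (n : int) x : zit f g n (zit f g (- n) x) = x.
Proof. by rewrite -zitD // subrr. Qed.

End Iterates.

Lemma continuous_zit (X : topologicalType) (f g : X -> X) (n : int) :
  continuous f -> continuous g -> continuous (zit f g n).
Proof.
move=> cf cg; case: n => [k|k] /=.
- elim: k => [|k IH] x /=; first exact: cvg_id.
  by apply: continuous_comp; [exact: IH|exact: cf].
- elim: k => [|k IH] x /=; first exact: cg.
  by apply: continuous_comp; [exact: IH|exact: cg].
Qed.

Section ProximalCell.
Context {R : realType} {X : metricType R} {f g : X -> X}.
Hypothesis (hf : homeomorphism f g).

Let fK : cancel f g. Proof. by case: hf. Qed.
Let gK : cancel g f. Proof. by case: hf => _ []. Qed.

Lemma proximal_cell_zit (n : int) x y :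
  proximal_cell f g (zit f g n x) (zit f g n y) = proximal_cell f g x y.
Proof.
rewrite /proximal_cell /=; congr (inf _ = 0).
apply/seteqP; split => r /= [m _ <-].
- by exists (m + n) => //; rewrite !zitD.
- by exists (m - n) => //; rewrite -!zitD // subrK.
Qed.

Lemma preimage_zit_proximal_cell (n : int) x :
  zit f g n @^-1` proximal_cell f g x = proximal_cell f g (zit f g (- n) x).
Proof.
apply/seteqP; split => y /=.
- by rewrite -{1}(zitNK fK gK n x) proximal_cell_zit.
- by rewrite -[in C in C -> _](proximal_cell_zit n) (zitNK fK gK).
Qed.

Lemma preimage_zit_interior_proximal_cell (n : int) x :
  zit f g n @^-1` interior (proximal_cell f g x) `<=`
  interior (proximal_cell f g (zit f g (- n) x)).
Proof.
have [_ [_ [cf cg]]] := hf.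
rewrite -open_subsetE; last first.
  by apply: open_comp => [y _|]; [exact: continuous_zit|exact: open_interior].
rewrite -preimage_zit_proximal_cell; apply: preimage_subset.
exact: interior_subset.
Qed.

Lemma interior_proximal_cells_cover x :
  minimal f g -> interior (proximal_cell f g x) !=set0 ->
  \bigcup_(m in [set: int]) interior (proximal_cell f g (zit f g m x)) = [set: X].
Proof.
move=> minf [u Uu]; apply/seteqP; split=> // z _.
have : closure (Defs.orbit f g z) u by rewrite minf.
case/(_ (interior (proximal_cell f g x))) => [|_ [[n _ <-] Unz]].
  by apply: open_nbhs_nbhs; split => //; exact: open_interior.
by exists (- n) => //; exact: preimage_zit_interior_proximal_cell.
Qed.

End ProximalCell.

Lemma negligible_bigcup_int {d} {T : sigmaRingType d} {R : realFieldType}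
    (mu : {measure set T -> \bar R}) (F : int -> set T) :
  (forall n, mu.-negligible (F n)) ->
  mu.-negligible (\bigcup_(n in [set: int]) F n).
Proof.
move=> nF.
apply: (@negligibleS _ _ _ _ ((\bigcup_k F (Posz k)) `|` \bigcup_k F (Negz k))).
  by move=> z [[k|k] _ Fz]; [left|right]; exists k.
by apply: negligibleU; apply: negligible_bigcup.
Qed.

Lemma probability_setT_not_negligible {d} {T : measurableType d} {R : realType}
    (P : probability T R) : ~ P.-negligible [set: T].
Proof.
move=> /(negligibleP _ measurableT) P0.
by have /eqP := probability_setT P; rewrite P0 eqe eq_sym oner_eq0.
Qed.

Theorem theorem2p15 (R : realType) (X : pointedMetricType R) (f g : X -> X) :
  compact [set: X] ->
  locally_connected X ->
  homeomorphism f g ->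
  minimal f g ->
  (exists mu : probability (g_sigma_algebraType (@open X)) R,
      inner_distal_measure f g mu) ->
  inner_distal f g.
Proof.
move=> _ _ hf minf [mu mu_id] x; rewrite -subset0 => u Uu.
case: (probability_setT_not_negligible mu).
rewrite -(interior_proximal_cells_cover hf x minf); last by exists u.
apply: negligible_bigcup_int => m; apply/negligibleP; last exact: mu_id.
apply: sub_sigma_algebra; exact: open_interior.
Qed.
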